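(* Let $n$ be a positive integer. The $V^{n}$-move and the $\overline{V}^{n}$-move are equivalent, i.e., each of them is realized by a sequence of the other move and welded Reidemeister moves.
   Context: A virtual link diagram is the image of an immersion of finitely many ordered, oriented circles in the plane with transverse double points, each a classical crossing (with over/under information) or a virtual crossing. Welded Reidemeister moves are R1–R3, the virtual moves VR1–VR3 (Reidemeister moves with all crossings virtual) and VR4 (a strand with only virtual crossings slides past a classical crossing), and the OC move (a strand passing over two strands at classical crossings may slide across a virtual crossing of those two strands). The $V^{n}$-move: inside a disk the diagram consists of two arcs $a,b$ oriented in the same direction; on one side they are parallel without crossings; on the other side (same endpoints) the tangle is the $2$-braid word $(\sigma\tau)^{n}$, where $\sigma$ is a classical crossing with $b$ over $a$ and $\tau$ a virtual crossing (so $n$ classical crossings, all with $b$ over, alternating with $n$ virtual crossings); the move replaces one side by the other. The $\overline{V}^{n}$-move is the same local move except that the two arcs $a,b$ are oriented antiparallel. *)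

From Stdlib Require Import Relations.Relation_Operators.
From mathcomp Require Import all_boot.
Set Implicit Arguments. Unset Strict Implicit. Unset Printing Implicit Defensive.

(* An endpoint of an arrow (= a classical crossing) on a circle:
   (label, over, sign).  [over = true]: the point is the over-passage (tail
   of the arrow); [over = false]: the under-passage (head).  [sign = true]:
   positive crossing.  Convention: a crossing is positive iff
   det(direction of over strand, direction of under strand) > 0. *)
Definition event := (nat * bool * bool)%type.
Definition ev_lab (e : event) : nat := e.1.1.
Definition ev_over (e : event) : bool := e.1.2.
Definition ev_sgn (e : event) : bool := e.2.

(* A diagram: the ordered list of its oriented circles, each given by the
   sequence of crossing passages met along its orientation, read from some
   base point (base points are irrelevant: see [rot_step]).  A circle with
   no classical crossing is the empty sequence. *)
Definition diagram := seq (seq event).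

Definition wf (D : diagram) : bool :=
  let evs := flatten D in
  all (fun e =>
    [&& count (fun e' => (ev_lab e' == ev_lab e) && ev_over e') evs == 1,
        count (fun e' => (ev_lab e' == ev_lab e) && ~~ ev_over e') evs == 1 &
        all (fun e' => (ev_lab e' == ev_lab e) ==> (ev_sgn e' == ev_sgn e)) evs])
    evs.

Definition citem := (nat + event)%type.
Definition context := seq (seq citem).

Definition fill (C : context) (f : nat -> seq event) : diagram :=
  map (fun c => flatten (map (fun it => match it with
                                        | inl k => f k
                                        | inr e => [:: e] end) c)) C.

Definition holes_ok (m : nat) (C : context) : Prop :=
  forall k, count (fun it => it == inl k) (flatten C) = (k < m)%N.

(* Replace, inside m small disjoint arcs (the holes), the local pictures
   [before k] by [after k]; both diagrams must be well formed (this forces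
   the labels of the local crossings to be fresh). *)
Definition local_step (m : nat) (before after : nat -> seq event)
    (D D' : diagram) : Prop :=
  exists C : context, [/\ holes_ok m C, D = fill C before, D' = fill C after,
                          wf D & wf D'].

Definition rot_step (D D' : diagram) : Prop :=
  exists i k, [/\ (i < size D)%N, wf D &
    D' = set_nth [::] D i (rot k (nth [::] D i))].

Definition relabel_step (D D' : diagram) : Prop :=
  exists f : nat -> nat, [/\ injective f, wf D &
    D' = map (map (fun e : event => (f (ev_lab e), ev_over e, ev_sgn e))) D].

(** * Welded Reidemeister moves on Gauss diagrams
    (VR1-VR4 are invisible in Gauss diagrams.) *)

Definition R1_step (D D' : diagram) : Prop :=
  exists l o s, local_step 1 (fun _ => [::])
                  (fun _ => [:: (l, o, s); (l, ~~ o, s)]) D D'.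

(* R2: a bigon; both over passages adjacent on one arc (hole 0), both under
   passages adjacent on another arc (hole 1), in the same order (parallel
   strands) or in the reverse order (antiparallel); opposite signs. *)
Definition R2_step (D D' : diagram) : Prop :=
  exists l1 l2 s (r : bool), local_step 2 (fun _ => [::])
    (fun k => if k == 0 then [:: (l1, true, s); (l2, true, ~~ s)]
              else (if r then rev else id) [:: (l1, false, s); (l2, false, ~~ s)])
    D D'.

(* R3: three oriented lines in the plane, in the fixed model
     L0 : y = 0, direction (1,0);  L1 : x = 0, direction (0,1);
     L2 : through (0,c), direction (1,1),
   each oriented by o i (true = the given direction, false = its opposite),
   with pairwise distinct heights h i (larger = higher).  The move slides L2
   from c = -1 to c = 1 across L0 /\ L1.  Every R3 configuration is of this
   form up to relabelling of the strands, orientations and direction of the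
   move (a reflection of the plane is such a relabelling + reversal). *)
Section R3.
Variables (h : nat -> nat) (o : nat -> bool) (l01 l02 l12 : nat).

Definition r3_lab (i j : nat) : nat :=
  if [|| (i == 0) && (j == 1) | (i == 1) && (j == 0)] then l01
  else if [|| (i == 0) && (j == 2) | (i == 2) && (j == 0)] then l02 else l12.

(* sign of det(D a, D b) for the base directions D0 = (1,0), D1 = (0,1),
   D2 = (1,1): positive exactly for (0,1), (0,2), (2,1) *)
Definition detpos (a b : nat) : bool :=
  [|| (a == 0) && (b == 1), (a == 0) && (b == 2) | (a == 2) && (b == 1)].

Definition r3_sgn (i j : nat) : bool :=
  let ov := if (h j < h i)%N then i else j in
  let un := if (h j < h i)%N then j else i in
  (o ov == o un) == detpos ov un.

Definition r3_ev (i j : nat) : event := (r3_lab i j, (h j < h i)%N, r3_sgn i j).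

(* order of the two crossings along each oriented line for c = -1:
   along L0: L1 at 0, L2 at o0;  along L1: L0 at 0, L2 at -o1;
   along L2: L0 at o2, L1 at 0 (oriented parameters, o = +-1). *)
Definition r3_before (i : nat) : seq event :=
  if i == 0 then (if o 0 then [:: r3_ev 0 1; r3_ev 0 2] else [:: r3_ev 0 2; r3_ev 0 1])
  else if i == 1 then (if o 1 then [:: r3_ev 1 2; r3_ev 1 0] else [:: r3_ev 1 0; r3_ev 1 2])
  else (if o 2 then [:: r3_ev 2 1; r3_ev 2 0] else [:: r3_ev 2 0; r3_ev 2 1]).

Definition r3_after (i : nat) : seq event := rev (r3_before i).
End R3.

Definition R3_step (D D' : diagram) : Prop :=
  exists h o l01 l02 l12,
    [/\ h 0 != h 1, h 0 != h 2, h 1 != h 2 &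
        local_step 3 (r3_before h o l01 l02 l12) (r3_after h o l01 l02 l12) D D'].

Definition OC_step (D D' : diagram) : Prop :=
  exists l1 l2 s1 s2, local_step 1 (fun _ => [:: (l1, true, s1); (l2, true, s2)])
                                   (fun _ => [:: (l2, true, s2); (l1, true, s1)]) D D'.

Definition welded_step (D D' : diagram) : Prop :=
  rot_step D D' \/ relabel_step D D' \/ R1_step D D' \/ R2_step D D'
  \/ R3_step D D' \/ OC_step D D'.

(* Hole 0 is the arc a, hole 1 the arc b.  In (sigma tau)^n every classical
   crossing has b over a and the same local picture, hence the same sign;
   [eps] is this sign (it depends on the drawing of sigma, so we keep it as a
   parameter).  Along a the crossings are met in the order 1..n; along b
   also 1..n when a,b are parallel (V^n), and n..1 when b is reversed
   (Vbar^n); reversing b also flips every crossing sign, so the Vbar^n move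
   drawn with the same sigma has sign ~~ eps. *)
Definition Vn_step (n : nat) (eps : bool) (D D' : diagram) : Prop :=
  exists l : nat -> nat, local_step 2 (fun _ => [::])
    (fun k => if k == 0 then [seq (l i, false, eps) | i <- iota 0 n]
              else [seq (l i, true, eps) | i <- iota 0 n]) D D'.

Definition Vbarn_step (n : nat) (eps : bool) (D D' : diagram) : Prop :=
  exists l : nat -> nat, local_step 2 (fun _ => [::])
    (fun k => if k == 0 then [seq (l i, false, ~~ eps) | i <- iota 0 n]
              else rev [seq (l i, true, ~~ eps) | i <- iota 0 n]) D D'.

Definition welded_plus (M : diagram -> diagram -> Prop) : diagram -> diagram -> Prop :=
  clos_refl_sym_trans diagram (fun D D' => welded_step D D' \/ M D D').

From Stdlib Require Import Relations.Relation_Operators.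
From mathcomp Require Import all_boot zify.
Set Implicit Arguments. Unset Strict Implicit. Unset Printing Implicit Defensive.

(* A V^n or Vbar^n move adds n crossings between the arcs a and b, all with
   their under passage on a and their over passage on b; along b only over
   passages are met, so OC reorders them freely.  Apply to the result of one
   move the other move, with the opposite sign and fresh crossings m_1..m_n
   placed right after l_1..l_n on a.  After reordering b by OC, the pairs
   (l_i, m_(n+1-i)) form n nested bigons, which R2 removes: the diagram before
   the first move is reached.  So either move is a welded move sequence
   followed by the inverse of the other move. *)

Definition fill_item (f : nat -> seq event) (it : citem) : seq event :=
  match it with inl k => f k | inr e => [:: e] end.

Definition fill_arc (f : nat -> seq event) (c : seq citem) : seq event :=
  flatten (map (fill_item f) c).

Definition fill2 (C : context) (A B : seq event) : diagram :=
  fill C (fun k => if k == 0 then A else B).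

Definition labels (D : diagram) : seq nat := map ev_lab (flatten D).

Lemma fill_arc_cat f s t : fill_arc f (s ++ t) = fill_arc f s ++ fill_arc f t.
Proof. by rewrite /fill_arc map_cat flatten_cat. Qed.

Lemma fill_arc_inr f s : fill_arc f (map inr s) = s.
Proof. by elim: s => //= e s IH; rewrite /fill_arc /= -/(fill_arc _ _) IH. Qed.

Lemma flatten_fill C f : flatten (fill C f) = fill_arc f (flatten C).
Proof. by elim: C => //= c C ->; rewrite fill_arc_cat. Qed.

Lemma eq_fill C f g : f =1 g -> fill C f = fill C g.
Proof. by move=> fg; apply: eq_map => c; congr flatten; apply: eq_map => [[k|e]] /=. Qed.

Lemma sumn_holes2 C (G : citem -> nat) : holes_ok 2 C -> (forall e, G (inr e) = 0) ->
  sumn (map G (flatten C)) = G (inl 0) + G (inl 1).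
Proof.
move=> HC G0.
have holesC : perm_eq (filter is_inl (flatten C)) [:: inl 0; inl 1].
  apply/allP => it _; rewrite /= count_filter.
  case: it => [k|e].
    rewrite (@eq_count _ _ (pred1 (inl k))) => [|it /=]; last by case: eqP => // ->.
    by rewrite (HC k); case: k => [|[|k]].
  by rewrite (@eq_count _ _ pred0) ?count_pred0 // => it /=; case: eqP => // ->.
have -> : sumn (map G (flatten C)) = sumn (map G (filter is_inl (flatten C))).
  by elim: (flatten C) => //= [[k|e] s ->] /=; rewrite ?G0.
by rewrite (perm_sumn (perm_map G holesC)) /= addn0.
Qed.

Lemma count_fill_arc p f c : count p (fill_arc f c) =
  count p (fill_arc (fun _ => [::]) c)
  + sumn [seq (if it is inl k then count p (f k) else 0) | it <- c].
Proof.
elim: c => [|it c IH] //.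
rewrite /fill_arc /= -/(fill_arc f c) -/(fill_arc _ c) !count_cat IH.
by case: it => [k|e] /=; rewrite add0n; [rewrite addnCA | rewrite addnA].
Qed.

Lemma perm_flatten_fill2 C A B : holes_ok 2 C ->
  perm_eq (flatten (fill2 C A B)) (flatten (fill2 C [::] [::]) ++ A ++ B).
Proof.
move=> HC; apply/permP => p; rewrite !count_cat !flatten_fill.
rewrite (count_fill_arc p (fun k => if k == 0 then A else B)).
rewrite (count_fill_arc p (fun k => if k == 0 then [::] else [::])).
by rewrite !sumn_holes2 //= !addn0.
Qed.

Lemma fill2_nil C : fill C (fun _ => [::]) = fill2 C [::] [::].
Proof. by apply: eq_fill => k; case: (k == 0). Qed.

Definition wf_seq (evs : seq event) : bool :=
  all (fun e =>
    [&& count (fun e' => (ev_lab e' == ev_lab e) && ev_over e') evs == 1,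
        count (fun e' => (ev_lab e' == ev_lab e) && ~~ ev_over e') evs == 1 &
        all (fun e' => (ev_lab e' == ev_lab e) ==> (ev_sgn e' == ev_sgn e)) evs])
    evs.

Lemma wfE D : wf D = wf_seq (flatten D). Proof. by []. Qed.

Lemma wf_seq_perm s t : perm_eq s t -> wf_seq s = wf_seq t.
Proof.
move=> st; rewrite /wf_seq (perm_all _ st); apply: eq_all => e.
by rewrite !(permP st) (perm_all _ st).
Qed.

Definition under_pass (s : bool) (x : nat) : event := (x, false, s).
Definition over_pass (s : bool) (x : nat) : event := (x, true, s).

Lemma wf_seq_arrow_cons x s E :
  wf_seq (under_pass s x :: over_pass s x :: E) = (x \notin map ev_lab E) && wf_seq E.
Proof.
rewrite /wf_seq /under_pass /over_pass /ev_lab /ev_over /ev_sgn /=.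
rewrite !eqxx !andbT !andbF !add0n !add1n !eqSS.
have [xE | xE] := boolP (x \in [seq e.1.1 | e <- E]).
  case/mapP: xE => e eE ->.
  have met (p : pred event) : p e ->
      count (fun e' : event => (e'.1.1 == e.1.1) && p e') E == 0 = false.
    by move=> pe; apply/negbTE; rewrite -lt0n -has_count; apply/hasP; exists e; rewrite /= ?eqxx.
  case eb: e.1.2; first by rewrite (met (fun e' => e'.1.2)).
  by rewrite (met (fun e' => ~~ e'.1.2)) /= ?andbF ?eb.
have other e : e \in E -> (x == e.1.1) = false.
  by move=> eE; apply: contraNF xE => /eqP ->; apply: map_f.
have unmet (p : pred event) : count (fun e' : event => (e'.1.1 == x) && p e') E = 0.
  by apply/eqP; rewrite -leqn0 leqNgt -has_count; apply/hasPn => e /other; rewrite eq_sym => ->.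
rewrite (unmet (fun e => e.1.2)) (unmet (fun e => ~~ e.1.2)) /=.
have -> : all (fun e' : event => (e'.1.1 == x) ==> (e'.2 == s)) E.
  by apply/allP => e /other; rewrite eq_sym => ->.
by apply: eq_in_all => e /other ->.
Qed.

Definition arrows (ps : seq (nat * bool)) : seq event :=
  flatten [seq [:: under_pass p.2 p.1; over_pass p.2 p.1] | p <- ps].

Lemma arrows_cat ps qs : arrows (ps ++ qs) = arrows ps ++ arrows qs.
Proof. by rewrite /arrows map_cat flatten_cat. Qed.

Lemma wf_seq_arrows ps E : wf_seq (arrows ps ++ E) =
  [&& uniq (map fst ps), all (fun p => p.1 \notin map ev_lab E) ps & wf_seq E].
Proof.
elim: ps => //= [[x s] ps IH]; rewrite wf_seq_arrow_cons IH map_cat mem_cat negb_or.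
have -> : (x \in map ev_lab (arrows ps)) = (x \in map fst ps).
  by elim: ps {IH} => //= p ps IH; rewrite !inE -IH orbA orbb.
by case: (x \in map fst ps); case: (x \in map ev_lab E); rewrite /= ?andbF.
Qed.

Lemma perm_arrows s ls :
  perm_eq (arrows [seq (x, s) | x <- ls]) (map (under_pass s) ls ++ map (over_pass s) ls).
Proof.
elim: ls => //= x ls IH; rewrite perm_cons perm_sym -[over_pass s x :: _]cat1s.
by rewrite perm_catCA /= perm_cons perm_sym.
Qed.

Section WfFill2.
Variable C : context.
Hypothesis HC : holes_ok 2 C.

Lemma wf_fill2_arrows A B A' B' ps : perm_eq (A ++ B) (arrows ps ++ A' ++ B') ->
  wf (fill2 C A B) =
  [&& uniq (map fst ps), all (fun p => p.1 \notin labels (fill2 C A' B')) ps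
    & wf (fill2 C A' B')].
Proof.
move=> AB; set E := flatten (fill2 C [::] [::]).
have flat' : perm_eq (flatten (fill2 C A' B')) (E ++ A' ++ B') := perm_flatten_fill2 A' B' HC.
rewrite !wfE (@wf_seq_perm _ (arrows ps ++ E ++ A' ++ B')); last first.
  apply: perm_trans (perm_flatten_fill2 A B HC) _.
  by rewrite perm_sym perm_catCA perm_cat2l perm_sym.
rewrite wf_seq_arrows (wf_seq_perm flat'); congr [&& _, _ & _].
by apply: eq_all => p; rewrite /labels (perm_mem (perm_map ev_lab flat')).
Qed.

Lemma wf_fill2_perm A B A' B' :
  perm_eq (A ++ B) (A' ++ B') -> wf (fill2 C A B) -> wf (fill2 C A' B').
Proof. by move=> AB; rewrite (wf_fill2_arrows (ps := [::]) AB). Qed.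

Lemma wf_fill2_remove_arrows A B A' B' ps : perm_eq (A ++ B) (arrows ps ++ A' ++ B') ->
  wf (fill2 C A B) -> wf (fill2 C A' B').
Proof. by move=> AB; rewrite (wf_fill2_arrows AB) => /and3P []. Qed.

Lemma wf_fill2_add_arrows A B A' B' ps : perm_eq (A' ++ B') (arrows ps ++ A ++ B) ->
  uniq (map fst ps) -> all (fun p => p.1 \notin labels (fill2 C A B)) ps ->
  wf (fill2 C A B) -> wf (fill2 C A' B').
Proof. by move=> AB uniq_ps fresh_ps w; rewrite (wf_fill2_arrows AB) uniq_ps fresh_ps. Qed.

End WfFill2.

Lemma fresh_labelling D : exists2 f : nat -> nat, injective f & forall i, f i \notin labels D.
Proof.
exists (addn (\max_(y <- labels D) y).+1) => [|i]; first exact: addnI.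
apply/negP => /(leq_bigmax_seq (P := predT) (F := id)) /(_ isT).
by rewrite /= leqNgt addSn ltnS leq_addr.
Qed.

Definition subst_item (h : nat -> seq citem) (it : citem) : seq citem :=
  match it with inl k => h k | inr e => [:: inr e] end.

Definition subst_holes (C : context) (h : nat -> seq citem) : context :=
  map (fun c => flatten (map (subst_item h) c)) C.

Lemma fill_subst_holes C h f : fill (subst_holes C h) f = fill C (fun k => fill_arc f (h k)).
Proof.
rewrite /fill /subst_holes -map_comp; apply: eq_map => c /=.
by elim: c => //= it c IH; rewrite map_cat flatten_cat IH; case: it.
Qed.

Lemma flatten_subst_holes C h :
  flatten (subst_holes C h) = flatten (map (subst_item h) (flatten C)).
Proof. by elim: C => //= c C ->; rewrite map_cat flatten_cat. Qed.

Lemma local_step_fill2 m bef aft C P Q : holes_ok 2 C ->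
  (forall k, count (pred1 (inl k)) P + count (pred1 (inl k)) Q = (k < m)) ->
  wf (fill2 C (fill_arc bef P) (fill_arc bef Q)) ->
  wf (fill2 C (fill_arc aft P) (fill_arc aft Q)) ->
  local_step m bef aft (fill2 C (fill_arc bef P) (fill_arc bef Q))
                       (fill2 C (fill_arc aft P) (fill_arc aft Q)).
Proof.
move=> HC PQ wbef waft; pose h k := if k == 0 then P else Q.
have fillE f : fill (subst_holes C h) f = fill2 C (fill_arc f P) (fill_arc f Q).
  by rewrite fill_subst_holes; apply: eq_fill => k; rewrite /h; case: (k == 0).
exists (subst_holes C h); rewrite !fillE; split=> // k.
rewrite flatten_subst_holes count_flatten -map_comp.
by rewrite (sumn_holes2 (G := fun it => count _ (subst_item h it))) //; apply: PQ.
Qed.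

Definition plug (A1 : seq event) (k : nat) (A2 : seq event) : seq citem :=
  map inr A1 ++ inl k :: map inr A2.

Lemma fill_arc_plug f A1 k A2 : fill_arc f (plug A1 k A2) = A1 ++ f k ++ A2.
Proof. by rewrite /plug -cat1s !fill_arc_cat !fill_arc_inr /fill_arc /= cats0. Qed.

Lemma count_hole_inr k A : count (pred1 (inl k)) (map inr A : seq citem) = 0.
Proof. by elim: A. Qed.

Lemma count_hole_plug k A1 j A2 : count (pred1 (inl k)) (plug A1 j A2) = (j == k).
Proof. by rewrite count_cat count_hole_inr /= count_hole_inr addn0. Qed.

Lemma local_step2_fill2 bef aft C i j A1 A2 B1 B2 :
  holes_ok 2 C -> perm_eq [:: i; j] [:: 0; 1] ->
  wf (fill2 C (A1 ++ bef i ++ A2) (B1 ++ bef j ++ B2)) ->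
  wf (fill2 C (A1 ++ aft i ++ A2) (B1 ++ aft j ++ B2)) ->
  local_step 2 bef aft (fill2 C (A1 ++ bef i ++ A2) (B1 ++ bef j ++ B2))
                       (fill2 C (A1 ++ aft i ++ A2) (B1 ++ aft j ++ B2)).
Proof.
move=> HC ij.
have := local_step_fill2 (bef := bef) (aft := aft) (P := plug A1 i A2) (Q := plug B1 j B2) HC.
rewrite !fill_arc_plug; apply=> k; rewrite !count_hole_plug.
by have := permP ij (pred1 k); rewrite /= !addn0; case: k => [|[|k]].
Qed.

Lemma local_step1_fill2 bef aft C A B1 B2 : holes_ok 2 C ->
  wf (fill2 C A (B1 ++ bef 0 ++ B2)) -> wf (fill2 C A (B1 ++ aft 0 ++ B2)) ->
  local_step 1 bef aft (fill2 C A (B1 ++ bef 0 ++ B2)) (fill2 C A (B1 ++ aft 0 ++ B2)).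
Proof.
move=> HC.
have := local_step_fill2 (bef := bef) (aft := aft) (P := map inr A) (Q := plug B1 0 B2) HC.
rewrite !fill_arc_plug !fill_arc_inr; apply=> k; rewrite count_hole_inr count_hole_plug.
by case: k.
Qed.

Lemma local_step_insert C A B X Y : holes_ok 2 C ->
  wf (fill2 C A B) -> wf (fill2 C (A ++ X) (Y ++ B)) ->
  local_step 2 (fun _ => [::]) (fun k => if k == 0 then X else Y)
    (fill2 C A B) (fill2 C (A ++ X) (Y ++ B)).
Proof.
move=> HC.
have := local_step2_fill2 (bef := fun _ => [::]) (aft := fun k => if k == 0 then X else Y)
  (A1 := A) (A2 := [::]) (B1 := [::]) (B2 := B) HC (isT : perm_eq [:: 0; 1] [:: 0; 1]).
by rewrite /= !cats0.
Qed.

Section WeldedPlus.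
Variable M : diagram -> diagram -> Prop.
Notation R := (welded_plus M).

Lemma welded_plus_move D D' : M D D' -> R D D'.
Proof. by move=> DD'; apply: rst_step; right. Qed.

Lemma welded_plus_R2 D D' : R2_step D D' -> R D D'.
Proof. by move=> DD'; apply: rst_step; left; do 3 right; left. Qed.

Lemma welded_plus_OC D D' : OC_step D D' -> R D D'.
Proof. by move=> DD'; apply: rst_step; left; do 5 right. Qed.

Variable C : context.
Hypothesis HC : holes_ok 2 C.

Lemma welded_OC_swap A B1 B2 t u : ev_over t -> ev_over u ->
  wf (fill2 C A (B1 ++ t :: u :: B2)) ->
  R (fill2 C A (B1 ++ t :: u :: B2)) (fill2 C A (B1 ++ u :: t :: B2)).
Proof.
case: t u => [[x []] sx] [[y []] sy] // _ _ wxy.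
have wyx : wf (fill2 C A (B1 ++ (y, true, sy) :: (x, true, sx) :: B2)).
  by apply: (wf_fill2_perm HC _ wxy); rewrite !perm_cat2l; apply/permP => q /=; rewrite addnCA.
apply: welded_plus_OC; exists x, y, sx, sy.
exact: (local_step1_fill2 (bef := fun _ => [:: (x, true, sx); (y, true, sy)])
                          (aft := fun _ => [:: (y, true, sy); (x, true, sx)]) HC wxy wyx).
Qed.

Lemma welded_OC_shift A B1 B2 t S : ev_over t -> all ev_over S ->
  wf (fill2 C A (B1 ++ t :: S ++ B2)) ->
  R (fill2 C A (B1 ++ t :: S ++ B2)) (fill2 C A (B1 ++ S ++ t :: B2)).
Proof.
move=> ot; elim: S B1 => [|u S IH] B1 /=; first by move=> _ _; apply: rst_refl.
case/andP => ou oS w; apply: rst_trans (welded_OC_swap ot ou w) _.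
have := IH (rcons B1 u) oS; rewrite !cat_rcons; apply.
by apply: (wf_fill2_perm HC _ w); rewrite !perm_cat2l; apply/permP => q /=; rewrite addnCA.
Qed.

Lemma welded_OC_perm A B1 S S' : all ev_over S -> perm_eq S S' ->
  wf (fill2 C A (B1 ++ S)) -> R (fill2 C A (B1 ++ S)) (fill2 C A (B1 ++ S')).
Proof.
elim: S B1 S' => [|t S IH] B1 S' /=.
  by move=> _; rewrite perm_sym => /perm_nilP -> _; apply: rst_refl.
case/andP => ot oS tSS' w.
have : t \in S' by rewrite -(perm_mem tSS') mem_head.
move: tSS' => /[swap] /splitPr [S1 S2] tSS'.
have SS12 : perm_eq S (S1 ++ S2).
  by rewrite -(perm_cons t); exact: perm_trans tSS' (@permEl _ _ _ (perm_catCA S1 [:: t] S2)).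
have oS12 : all ev_over (S1 ++ S2) by rewrite -(perm_all _ SS12).
have w12 : wf (fill2 C A (B1 ++ t :: S1 ++ S2)).
  by apply: (wf_fill2_perm HC _ w); rewrite !perm_cat2l perm_cons.
apply: rst_trans (_ : R _ (fill2 C A (B1 ++ t :: S1 ++ S2))) _.
  by have := IH (rcons B1 t) (S1 ++ S2) oS SS12; rewrite !cat_rcons; apply.
move: oS12; rewrite all_cat => /andP [oS1 _].
exact: welded_OC_shift.
Qed.

Lemma welded_nested_bigons s ls ms A1 A2 B1 B2 : size ls = size ms ->
  wf (fill2 C (A1 ++ map (under_pass s) ls ++ map (under_pass (~~ s)) (rev ms) ++ A2)
              (B1 ++ map (over_pass s) ls ++ map (over_pass (~~ s)) (rev ms) ++ B2)) ->
  R (fill2 C (A1 ++ A2) (B1 ++ B2))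
    (fill2 C (A1 ++ map (under_pass s) ls ++ map (under_pass (~~ s)) (rev ms) ++ A2)
             (B1 ++ map (over_pass s) ls ++ map (over_pass (~~ s)) (rev ms) ++ B2)).
Proof.
elim: ls ms A1 A2 B1 B2 => [|l ls IH] [|m ms] //= A1 A2 B1 B2; first by move=> _ _; apply: rst_refl.
rewrite rev_cons !map_rcons !cat_rcons => -[size_lm] w.
have wmid : wf (fill2 C (A1 ++ [:: under_pass s l; under_pass (~~ s) m] ++ A2)
                        (B1 ++ [:: over_pass s l; over_pass (~~ s) m] ++ B2)).
  pose ps := [seq (x, s) | x <- ls] ++ [seq (x, ~~ s) | x <- rev ms].
  apply: (wf_fill2_remove_arrows (ps := ps) HC _ w).
  apply/permP => q; rewrite arrows_cat !count_cat !(permP (perm_arrows _ _)) /= !count_cat /=.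
  lia.
have wstart : wf (fill2 C (A1 ++ A2) (B1 ++ B2)).
  apply: (wf_fill2_remove_arrows (ps := [:: (l, s); (m, ~~ s)]) HC _ wmid).
  by apply/permP => q; rewrite !count_cat /=; lia.
apply: rst_trans (_ : R _ (fill2 C (A1 ++ [:: under_pass s l; under_pass (~~ s) m] ++ A2)
                                   (B1 ++ [:: over_pass s l; over_pass (~~ s) m] ++ B2))) _.
  apply: welded_plus_R2; exists l, m, s, false.
  (* hole 0 of R2 carries the over passages, so it sits on arc b *)
  exact: (local_step2_fill2 (i := 1) (j := 0) (bef := fun _ => [::])
     (aft := fun k => if k == 0 then [:: (l, true, s); (m, true, ~~ s)]
                      else [:: (l, false, s); (m, false, ~~ s)])
     HC isT wstart wmid).
by have := IH ms (rcons A1 (under_pass s l)) (under_pass (~~ s) m :: A2)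
  (rcons B1 (over_pass s l)) (over_pass (~~ s) m :: B2) size_lm; rewrite !cat_rcons; apply.
Qed.

Lemma welded_bigons_perm s ls L B : size ls = size L ->
  perm_eq B (map (over_pass s) ls ++ map (over_pass (~~ s)) L) ->
  wf (fill2 C (map (under_pass s) ls ++ map (under_pass (~~ s)) L) B) ->
  R (fill2 C [::] [::]) (fill2 C (map (under_pass s) ls ++ map (under_pass (~~ s)) L) B).
Proof.
move=> size_lL B_perm w; set B0 := map (over_pass s) ls ++ map (over_pass (~~ s)) L.
have w0 : wf (fill2 C (map (under_pass s) ls ++ map (under_pass (~~ s)) L) B0).
  by apply: (wf_fill2_perm HC _ w); rewrite perm_cat2l.
apply: rst_trans (_ : R _ (fill2 C (map (under_pass s) ls ++ map (under_pass (~~ s)) L) B0)) _.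
  have := @welded_nested_bigons s ls (rev L) [::] [::] [::] [::].
  by rewrite size_rev revK /= !cats0; apply.
apply: (@welded_OC_perm _ [::]) => //; last by rewrite perm_sym.
by rewrite all_cat !all_map; apply/andP; split; apply/allP.
Qed.

End WeldedPlus.

Lemma welded_plus_cancel_insertion M C s ls L Bls Y : holes_ok 2 C ->
  uniq L -> {in L, forall x, x \notin labels (fill2 C (map (under_pass s) ls) Bls)} ->
  size ls = size L -> perm_eq Bls (map (over_pass s) ls) ->
  perm_eq Y (map (over_pass (~~ s)) L) ->
  wf (fill2 C (map (under_pass s) ls) Bls) ->
  (wf (fill2 C (map (under_pass s) ls ++ map (under_pass (~~ s)) L) (Y ++ Bls)) ->
   M (fill2 C (map (under_pass s) ls) Bls)
     (fill2 C (map (under_pass s) ls ++ map (under_pass (~~ s)) L) (Y ++ Bls))) ->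
  welded_plus M (fill2 C [::] [::]) (fill2 C (map (under_pass s) ls) Bls).
Proof.
move=> HC uniq_L fresh_L size_lsL perm_Bls perm_Y wD' insertion.
have wT : wf (fill2 C (map (under_pass s) ls ++ map (under_pass (~~ s)) L) (Y ++ Bls)).
  apply: (wf_fill2_add_arrows (ps := [seq (x, ~~ s) | x <- L]) HC _ _ _ wD').
  - apply/permP => q; rewrite !count_cat (permP (perm_arrows _ _)) (permP perm_Y) !count_cat.
    lia.
  - by rewrite -map_comp map_id.
  - by rewrite all_map; apply/allP => x /fresh_L.
apply: rst_trans (welded_bigons_perm M HC size_lsL _ wT) _.
  by rewrite perm_catC; apply: perm_cat.
exact/rst_sym/welded_plus_move/insertion.
Qed.

Lemma Vn_step_welded_Vbarn n eps D D' : Vn_step n eps D D' -> welded_plus (Vbarn_step n eps) D D'.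
Proof.
case=> l [C [HC -> -> _]]; set ls := map l (iota 0 n).
have -> : [seq (l i, false, eps) | i <- iota 0 n] = map (under_pass eps) ls by rewrite -map_comp.
have -> : [seq (l i, true, eps) | i <- iota 0 n] = map (over_pass eps) ls by rewrite -map_comp.
rewrite fill2_nil => wD'.
have [f f_inj f_fresh] :=
  fresh_labelling (fill2 C (map (under_pass eps) ls) (map (over_pass eps) ls)).
set L := map f (iota 0 n).
apply: (welded_plus_cancel_insertion (L := L) (Y := rev (map (over_pass (~~ eps)) L))) => //.
- by rewrite map_inj_uniq ?iota_uniq.
- by move=> _ /mapP [i _ ->].
- by rewrite !size_map.
- by rewrite perm_rev.
move=> wT; exists f.
have -> : [seq (f i, false, ~~ eps) | i <- iota 0 n] = map (under_pass (~~ eps)) L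
  by rewrite -map_comp.
have -> : [seq (f i, true, ~~ eps) | i <- iota 0 n] = map (over_pass (~~ eps)) L
  by rewrite -map_comp.
exact: local_step_insert.
Qed.

Lemma Vbarn_step_welded_Vn n eps D D' : Vbarn_step n eps D D' -> welded_plus (Vn_step n eps) D D'.
Proof.
case=> l [C [HC -> -> _]]; set ls := map l (iota 0 n).
have -> : [seq (l i, false, ~~ eps) | i <- iota 0 n] = map (under_pass (~~ eps)) ls
  by rewrite -map_comp.
have -> : [seq (l i, true, ~~ eps) | i <- iota 0 n] = map (over_pass (~~ eps)) ls
  by rewrite -map_comp.
rewrite fill2_nil => wD'.
have [f f_inj f_fresh] :=
  fresh_labelling (fill2 C (map (under_pass (~~ eps)) ls) (rev (map (over_pass (~~ eps)) ls))).
set L := map f (iota 0 n).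
have := @welded_plus_cancel_insertion (Vn_step n eps) C (~~ eps) ls L
  (rev (map (over_pass (~~ eps)) ls)) (map (over_pass eps) L) HC.
rewrite negbK; apply => //.
- by rewrite map_inj_uniq ?iota_uniq.
- by move=> _ /mapP [i _ ->].
- by rewrite !size_map.
- by rewrite perm_rev.
move=> wT; exists f.
have -> : [seq (f i, false, eps) | i <- iota 0 n] = map (under_pass eps) L by rewrite -map_comp.
have -> : [seq (f i, true, eps) | i <- iota 0 n] = map (over_pass eps) L by rewrite -map_comp.
exact: local_step_insert.
Qed.

Theorem proposition7p6 (n : nat) (eps : bool) : (0 < n)%N ->
  (forall D D' : diagram, Vn_step n eps D D' -> welded_plus (Vbarn_step n eps) D D') /\
  (forall D D' : diagram, Vbarn_step n eps D D' -> welded_plus (Vn_step n eps) D D').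
Proof.
(* the argument does not need 0 < n: for n = 0 both moves are trivial *)
by move=> _; split=> D D'; [exact: Vn_step_welded_Vbarn | exact: Vbarn_step_welded_Vn].
Qed.
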